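(* Neither $\mathcal{L}_{ME}=\{(M,q)\mid ME[U](M)>q\}$ nor $\mathcal{L}_{GE}=\{(M,q)\mid GE[U](M)>q\}$ is a $k$-observable hyperproperty, for any positive integer $k$.
   Context: Stores map variables to values; $H$ is the high input variable and $O$ the low output variable. A trace is a sequence of stores. For a finite trace $t$, $t\circ t'$ is concatenation. A program is a set $M$ of infinite traces that is deterministic (two traces with the same initial value of $H$ are equal) and has a finite nonempty input domain $\mathbb{H}_M=\{\sigma_0(H)\}$. Input domains are unbounded in size. $M(h)$ is the output trace $(\sigma_1(O),\sigma_2(O),\dots)$ of the trace of $M$ starting with $H=h$. $\bot$ denotes termination. $M(h)=o$ means that for all $i$, $o_i=\bot$ or $M(h)_i=\bot$ or $M(h)_i=o_i$. For a distribution $\mu$ on $\mathbb{H}_M$, $\mu(O=o)=\sum_{h:M(h)=o}\mu(H=h)$, with conditional probabilities induced accordingly. $U$ is the uniform distribution on $\mathbb{H}_M$. Min-entropy QIF (log base 2): $\mathcal{V}[\mu](X)=\max_x\mu(X=x)$, $\mathcal{V}[\mu](X|Y)=\sum_y\mu(Y=y)\max_x\mu(X=x|Y=y)$, and $ME[\mu](M)=\log\frac1{\mathcal{V}[\mu](H)}-\log\frac1{\mathcal{V}[\mu](H|O)}$. Guessing-entropy QIF: $\mathcal{G}[\mu](X)=\sum_i i\,\mu(X=x_i)$ with the $x_i$ ordered by non-increasing probability; $\mathcal{G}[\mu](X|Y)=\sum_y\mu(Y=y)\sum_i i\,\mu(X=x_i|Y=y)$ with the analogous ordering for each $y$; and $GE[\mu](M)=\mathcal{G}[\mu](H)-\mathcal{G}[\mu](H|O)$.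 $\mathit{Prop}$ is the set of programs; $\mathit{Obs}$ is the set of deterministic finite sets of finite traces. For $S\in\mathit{Obs}$ and $T\in\mathit{Prop}$, $S\le T$ iff every $t\in S$ has some $t'$ with $t\circ t'\in T$. $P\subseteq\mathit{Prop}$ is $k$-observable iff for every $S\in P$ there is $T\in\mathit{Obs}$ with $T\le S$ and $|T|\le k$ such that every $S'\in\mathit{Prop}$ with $T\le S'$ is in $P$. A set $\mathcal{P}$ of pairs (program, rational) is $k$-observable iff $\{M\mid(M,q)\in\mathcal{P}\}$ is $k$-observable for every rational $q$, with the same $k$ for all $q$. *)

From Stdlib Require Import Reals List QArith Qreals ClassicalEpsilon ClassicalDescription.
Import ListNotations.
Local Open Scope R_scope.

(* Values: option nat, with None playing the role of ⊥ (termination). *)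
Definition Val : Type := option nat.
Definition bot : Val := None.
(* Variables are named by naturals; H is the high input, O the low output. *)
Definition Var : Type := nat.
Definition varH : Var := 0%nat.
Definition varO : Var := 1%nat.
Definition Store : Type := Var -> Val.
Definition dflt_store : Store := fun _ => bot.
Definition Trace : Type := nat -> Store.
Definition FTrace : Type := list Store.

Definition fconcat (t : FTrace) (t' : Trace) : Trace :=
  fun n => if Nat.ltb n (length t) then nth n t dflt_store else t' (n - length t)%nat.

Definition in_dom (M : Trace -> Prop) (h : Val) : Prop :=
  exists t, M t /\ t 0%nat varH = h.

Definition deterministic (M : Trace -> Prop) : Prop :=
  forall t t', M t -> M t' -> t 0%nat varH = t' 0%nat varH -> t = t'.

Definition is_program (M : Trace -> Prop) : Prop :=
  deterministic M /\
  exists l : list Val, l <> [] /\ forall h, In h l <-> in_dom M h.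

Definition is_obs (T : list FTrace) : Prop :=
  NoDup T /\
  forall s t s' t', In (s :: t) T -> In (s' :: t') T ->
    s varH = s' varH -> s :: t = s' :: t'.

Definition obs_le (S : list FTrace) (T : Trace -> Prop) : Prop :=
  forall t, In t S -> exists t' : Trace, T (fconcat t t').

Definition k_observable (P : (Trace -> Prop) -> Prop) (k : nat) : Prop :=
  forall S, P S ->
    exists T : list FTrace, is_obs T /\ obs_le T S /\ (length T <= k)%nat /\
      forall S', is_program S' -> obs_le T S' -> P S'.

Definition k_observable_pairs (PP : (Trace -> Prop) -> Q -> Prop) (k : nat) : Prop :=
  forall q : Q, k_observable (fun M => PP M q) k.

Definition dom (M : Trace -> Prop) : list Val :=
  epsilon (inhabits (@nil Val))
    (fun l => NoDup l /\ forall h, In h l <-> in_dom M h).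

Definition trace_of (M : Trace -> Prop) (h : Val) : Trace :=
  epsilon (inhabits (fun _ => dflt_store)) (fun t => M t /\ t 0%nat varH = h).

(* M(h) = (σ1(O), σ2(O), ...) *)
Definition outp (M : Trace -> Prop) (h : Val) : nat -> Val :=
  fun i => trace_of M h (S i) varO.

(* "M(h) = o" in the ⊥-tolerant sense of the paper *)
Definition out_eq (M : Trace -> Prop) (h : Val) (o : nat -> Val) : Prop :=
  forall i, o i = bot \/ outp M h i = bot \/ outp M h i = o i.

Definition ind (P : Prop) : R := if excluded_middle_informative P then 1 else 0.

Definition sumL {A : Type} (l : list A) (f : A -> R) : R :=
  fold_right (fun x acc => f x + acc) 0 l.

Definition maxL {A : Type} (l : list A) (f : A -> R) : R :=
  fold_right (fun x acc => Rmax (f x) acc) 0 l.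

(* sum of F over the set of observable outputs {M(h) | h ∈ H_M}, each
   distinct output counted once *)
Definition sum_outs (M : Trace -> Prop) (F : (nat -> Val) -> R) : R :=
  sumL (dom M) (fun h =>
    F (outp M h) / sumL (dom M) (fun h' => ind (outp M h' = outp M h))).

Definition dist := Val -> R.

Definition unif (M : Trace -> Prop) : dist :=
  fun h => if excluded_middle_informative (In h (dom M))
           then / INR (length (dom M)) else 0.

Definition prO (M : Trace -> Prop) (mu : dist) (o : nat -> Val) : R :=
  sumL (dom M) (fun h => mu h * ind (out_eq M h o)).

Definition prH_O (M : Trace -> Prop) (mu : dist) (h : Val) (o : nat -> Val) : R :=
  mu h * ind (out_eq M h o) / prO M mu o.

Definition log2 (x : R) : R := ln x / ln 2.

Definition V_H (M : Trace -> Prop) (mu : dist) : R := maxL (dom M) mu.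

Definition V_HO (M : Trace -> Prop) (mu : dist) : R :=
  sum_outs M (fun o => prO M mu o * maxL (dom M) (fun h => prH_O M mu h o)).

Definition ME (mu : dist) (M : Trace -> Prop) : R :=
  log2 (/ V_H M mu) - log2 (/ V_HO M mu).

Fixpoint insert_desc (x : R) (l : list R) : list R :=
  match l with
  | [] => [x]
  | y :: l' => if Rle_dec y x then x :: l else y :: insert_desc x l'
  end.

Fixpoint sort_desc (l : list R) : list R :=
  match l with
  | [] => []
  | x :: l' => insert_desc x (sort_desc l')
  end.

Fixpoint wsum (i : nat) (l : list R) : R :=
  match l with
  | [] => 0
  | p :: l' => INR i * p + wsum (S i) l'
  end.

Definition guess (ps : list R) : R := wsum 1 (sort_desc ps).

Definition G_H (M : Trace -> Prop) (mu : dist) : R := guess (map mu (dom M)).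

Definition G_HO (M : Trace -> Prop) (mu : dist) : R :=
  sum_outs M (fun o => prO M mu o * guess (map (fun h => prH_O M mu h o) (dom M))).

Definition GE (mu : dist) (M : Trace -> Prop) : R := G_H M mu - G_HO M mu.

Definition L_ME (M : Trace -> Prop) (q : Q) : Prop :=
  is_program M /\ ME (unif M) M > Q2R q.

Definition L_GE (M : Trace -> Prop) (q : Q) : Prop :=
  is_program M /\ GE (unif M) M > Q2R q.

(* Both leakages under the uniform prior are bounded by the size n of the input domain alone:
   ME <= log2 n, since the posterior vulnerability is at most 1, and GE <= n + 1, since
   guessing entropies are nonnegative and at most n + 1.  A program made of N constant, pairwise
   distinct traces reveals its input completely and leaks log2 N resp. (N - 1) / 2, which
   exceeds the threshold q = k + 2 for N = 2^(k+3).  But every observation of at most k finite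
   traces below such a program is also below a program made of at most k + 1 constant traces,
   whose leakage is at most q; hence no observation of size k witnesses the leakage bound. *)

From Stdlib Require Import Reals List Qreals Lia Lra Permutation ClassicalEpsilon ClassicalDescription.
Import ListNotations.
Local Open Scope R_scope.

Lemma ind_true (P : Prop) : P -> ind P = 1.
Proof. intro HP; unfold ind; destruct (excluded_middle_informative P); tauto. Qed.

Lemma ind_false (P : Prop) : ~ P -> ind P = 0.
Proof. intro HP; unfold ind; destruct (excluded_middle_informative P); tauto. Qed.

Lemma ind_bounds (P : Prop) : 0 <= ind P <= 1.
Proof. unfold ind; destruct (excluded_middle_informative P); lra. Qed.

Section ListSums.
Context {A : Type}.
Implicit Types (l : list A) (f g : A -> R).

Lemma sumL_ext l f g : (forall x, In x l -> f x = g x) -> sumL l f = sumL l g.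
Proof.
  induction l as [|x l IH]; intros Hfg; [reflexivity|]. unfold sumL in *; simpl.
  rewrite Hfg, IH; auto with datatypes.
Qed.

Lemma sumL_const l c : sumL l (fun _ => c) = INR (length l) * c.
Proof.
  induction l as [|x l IH]; [simpl; lra|]. cbn [length]. rewrite S_INR.
  unfold sumL in *; simpl. rewrite IH. lra.
Qed.

Lemma sumL_le l f g : (forall x, In x l -> f x <= g x) -> sumL l f <= sumL l g.
Proof.
  induction l as [|x l IH]; intros Hfg; [simpl; lra|].
  assert (Hx := Hfg x (or_introl eq_refl)).
  assert (Hl : sumL l f <= sumL l g) by (apply IH; auto with datatypes).
  unfold sumL in *; simpl; lra.
Qed.

Lemma sumL_nonneg l f : (forall x, In x l -> 0 <= f x) -> 0 <= sumL l f.
Proof.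
  intros Hf. rewrite <- (Rmult_0_r (INR (length l))), <- sumL_const. now apply sumL_le.
Qed.

Lemma sumL_ge_term l f x : (forall y, In y l -> 0 <= f y) -> In x l -> f x <= sumL l f.
Proof.
  induction l as [|y l IH]; intros Hf Hx; [destruct Hx|].
  assert (Hy := Hf y (or_introl eq_refl)).
  assert (Hl : 0 <= sumL l f) by (apply sumL_nonneg; auto with datatypes).
  destruct Hx as [<- | Hx].
  - unfold sumL in *; simpl; lra.
  - assert (f x <= sumL l f) by (apply IH; auto with datatypes). unfold sumL in *; simpl; lra.
Qed.

Lemma sumL_app l1 l2 f : sumL (l1 ++ l2) f = sumL l1 f + sumL l2 f.
Proof. induction l1 as [|x l1 IH]; unfold sumL in *; simpl; [lra|]. rewrite IH; lra. Qed.

Lemma sumL_map {B : Type} (l : list B) (h : B -> A) f : sumL (map h l) f = sumL l (fun y => f (h y)).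
Proof. induction l as [|y l IH]; unfold sumL in *; simpl; [reflexivity|]. now rewrite IH. Qed.

Lemma sumL_perm l l' f : Permutation l l' -> sumL l f = sumL l' f.
Proof. induction 1; unfold sumL in *; simpl; lra. Qed.

Lemma sumL_single l f x : NoDup l -> In x l ->
  (forall y, In y l -> y <> x -> f y = 0) -> sumL l f = f x.
Proof.
  intros Hnd Hx Hzero. destruct (in_split _ _ Hx) as (l1 & l2 & ->).
  apply NoDup_remove_2 in Hnd.
  assert (Hz : forall l', incl l' (l1 ++ x :: l2) -> ~ In x l' -> sumL l' f = 0).
  { intros l' Hincl Hnx. rewrite (sumL_ext l' f (fun _ => 0)), sumL_const; [lra|].
    intros y Hy. apply Hzero; [now apply Hincl|]. now intros ->. }
  assert (H1 : sumL l1 f = 0).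
  { apply Hz; [intros y Hy; apply in_app_iff; auto | intro; apply Hnd, in_app_iff; auto]. }
  assert (H2 : sumL l2 f = 0).
  { apply Hz; [intros y Hy; apply in_app_iff; simpl; auto | intro; apply Hnd, in_app_iff; auto]. }
  rewrite sumL_app. change (sumL (x :: l2) f) with (f x + sumL l2 f). lra.
Qed.

Lemma maxL_ge l f x : In x l -> f x <= maxL l f.
Proof.
  induction l as [|y l IH]; intros Hx; [destruct Hx|]. simpl.
  destruct Hx as [<- | Hx]; [apply Rmax_l|].
  eapply Rle_trans; [now apply IH | apply Rmax_r].
Qed.

Lemma maxL_le l f v : 0 <= v -> (forall x, In x l -> f x <= v) -> maxL l f <= v.
Proof.
  induction l as [|y l IH]; intros Hv Hf; simpl; [exact Hv|].
  apply Rmax_lub; auto with datatypes.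
Qed.

End ListSums.

Lemma insert_desc_perm x l : Permutation (insert_desc x l) (x :: l).
Proof.
  induction l as [|y l IH]; simpl; [reflexivity|].
  destruct (Rle_dec y x); [reflexivity|].
  eapply perm_trans; [apply perm_skip, IH | apply perm_swap].
Qed.

Lemma sort_desc_perm l : Permutation (sort_desc l) l.
Proof.
  induction l as [|x l IH]; simpl; [reflexivity|].
  eapply perm_trans; [apply insert_desc_perm | now apply perm_skip].
Qed.

Lemma wsum_nonneg i l : Forall (Rle 0) l -> 0 <= wsum i l.
Proof.
  intros Hl; revert i; induction Hl as [|x l Hx _ IH]; intros i; simpl; [lra|].
  specialize (IH (S i)). pose proof (pos_INR i). nra.
Qed.

Lemma wsum_le i l : Forall (Rle 0) l -> wsum i l <= INR (i + length l) * sumL l id.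
Proof.
  intros Hl; revert i; induction Hl as [|x l Hx Hl IH]; intros i.
  { unfold sumL; simpl. rewrite Rmult_0_r; lra. }
  cbn [wsum length]. specialize (IH (S i)).
  replace (i + S (length l))%nat with (S i + length l)%nat by lia.
  change (sumL (x :: l) id) with (x + sumL l id).
  assert (INR i <= INR (S i + length l)) by (apply le_INR; lia).
  assert (0 <= sumL l id) by (apply sumL_nonneg; rewrite Forall_forall in Hl; exact Hl).
  nra.
Qed.

Lemma guess_nonneg l : Forall (Rle 0) l -> 0 <= guess l.
Proof.
  intros Hl. apply wsum_nonneg.
  eapply Permutation_Forall; [apply Permutation_sym, sort_desc_perm | exact Hl].
Qed.

Lemma guess_le l : Forall (Rle 0) l -> guess l <= INR (1 + length l) * sumL l id.
Proof.
  intros Hl. unfold guess.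
  rewrite <- (Permutation_length (sort_desc_perm l)), <- (sumL_perm _ _ id (sort_desc_perm l)).
  apply wsum_le. eapply Permutation_Forall; [apply Permutation_sym, sort_desc_perm | exact Hl].
Qed.

Lemma wsum_repeat c n i : wsum i (repeat c n) = c * (INR n * INR i + INR n * (INR n - 1) / 2).
Proof.
  revert i; induction n as [|n IH]; intros i; [simpl; field|].
  cbn [wsum repeat]. rewrite IH, !S_INR. field.
Qed.

Lemma guess_repeat c n : guess (repeat c n) = c * INR n * (INR n + 1) / 2.
Proof.
  assert (Hsort : sort_desc (repeat c n) = repeat c n).
  { induction n as [|n IH]; simpl; [reflexivity|]. rewrite IH.
    destruct n; simpl; [reflexivity|]. destruct (Rle_dec c c); [reflexivity | lra]. }
  unfold guess. rewrite Hsort, wsum_repeat. simpl INR. field.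
Qed.

Lemma insert_desc_zero z : Forall (fun x => x = 0) z -> insert_desc 0 z = 0 :: z.
Proof.
  intros [|x z' Hx _]; simpl; [reflexivity|].
  destruct (Rle_dec x 0); [reflexivity | lra].
Qed.

Lemma sort_desc_zeros z : Forall (fun x => x = 0) z -> sort_desc z = z.
Proof.
  induction 1 as [|x z Hx Hz IH]; simpl; [reflexivity|].
  rewrite IH, Hx. now apply insert_desc_zero.
Qed.

Lemma sort_desc_one_hot l1 l2 : Forall (fun x => x = 0) l1 -> Forall (fun x => x = 0) l2 ->
  exists z, Forall (fun x => x = 0) z /\ sort_desc (l1 ++ 1 :: l2) = 1 :: z.
Proof.
  intros H1 H2. induction H1 as [|x l1 Hx _ [z [Hz IH]]]; simpl.
  - exists l2; split; [exact H2|]. rewrite sort_desc_zeros by exact H2.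
    destruct H2 as [|y l2 Hy _]; simpl; [reflexivity|].
    destruct (Rle_dec y 1); [reflexivity | lra].
  - exists (0 :: z); split; [now constructor|]. rewrite IH, Hx. simpl.
    destruct (Rle_dec 1 0); [lra|]. now rewrite insert_desc_zero.
Qed.

Lemma guess_one_hot l1 l2 : Forall (fun x => x = 0) l1 -> Forall (fun x => x = 0) l2 ->
  guess (l1 ++ 1 :: l2) = 1.
Proof.
  intros H1 H2. unfold guess. destruct (sort_desc_one_hot l1 l2 H1 H2) as [z [Hz ->]].
  assert (Hw : forall i, wsum i z = 0).
  { clear -Hz. induction Hz as [|x z Hx _ IH]; intros i; simpl; [reflexivity|].
    rewrite IH, Hx. ring. }
  simpl. rewrite Hw. ring.
Qed.

Definition Val_dec : forall x y : Val, {x = y} + {x <> y}.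
Proof. decide equality. decide equality. Defined.

Lemma is_program_intro M (cand : list Val) :
  deterministic M -> (exists h, in_dom M h) -> (forall h, in_dom M h -> In h cand) ->
  is_program M.
Proof.
  intros Hdet [h0 Hh0] Hcand. split; [exact Hdet|].
  set (inb h := if excluded_middle_informative (in_dom M h) then true else false).
  assert (Hinb : forall h, inb h = true <-> in_dom M h).
  { intro h; unfold inb. destruct (excluded_middle_informative (in_dom M h)) as [Hh|Hh];
      split; intro; first [reflexivity | assumption | discriminate | contradiction]. }
  exists (filter inb cand). split.
  - intros Hnil. assert (Hin : In h0 (filter inb cand)) by (apply filter_In; rewrite Hinb; auto).
    now rewrite Hnil in Hin.
  - intro h. rewrite filter_In, Hinb. split; [tauto | auto].
Qed.

Lemma dom_spec M : is_program M -> NoDup (dom M) /\ forall h, In h (dom M) <-> in_dom M h.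
Proof.
  intros [_ (l & _ & Hl)]. unfold dom. apply epsilon_spec.
  exists (nodup Val_dec l). split; [apply NoDup_nodup|]. intro h. rewrite nodup_In. apply Hl.
Qed.

Lemma in_dom_dom M h : is_program M -> In h (dom M) -> in_dom M h.
Proof. intros HM. apply (dom_spec M HM). Qed.

Lemma length_dom_pos M : is_program M -> (1 <= length (dom M))%nat.
Proof.
  intros HM. destruct (dom_spec M HM) as [_ Hdom]. destruct HM as [_ ([|h l] & Hne & Hl)]; [easy|].
  assert (Hh : In h (dom M)) by (apply Hdom, Hl; now left).
  destruct (dom M); [destruct Hh | simpl; lia].
Qed.

Lemma length_dom_le M cand : is_program M -> (forall h, in_dom M h -> In h cand) ->
  (length (dom M) <= length cand)%nat.
Proof.
  intros HM Hcand. destruct (dom_spec M HM) as [Hnd Hdom].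
  apply NoDup_incl_length; [exact Hnd|]. intros h Hh. now apply Hcand, Hdom.
Qed.

Lemma length_dom_eq M l : is_program M -> NoDup l -> (forall h, In h l <-> in_dom M h) ->
  length (dom M) = length l.
Proof.
  intros HM Hnd Hl. destruct (dom_spec M HM) as [Hnd' Hdom].
  apply Permutation_length, NoDup_Permutation; [exact Hnd' | exact Hnd |].
  intro h. now rewrite Hdom, Hl.
Qed.

Lemma trace_of_spec M h : in_dom M h -> M (trace_of M h) /\ trace_of M h 0%nat varH = h.
Proof. intros Hh. unfold trace_of. now apply epsilon_spec. Qed.

Lemma log2_1 : log2 1 = 0.
Proof. unfold log2. rewrite ln_1. lra. Qed.

Lemma log2_pow2 m : log2 (INR (2 ^ m)) = INR m.
Proof.
  unfold log2. rewrite pow_INR. replace (INR 2) with 2 by (simpl; lra).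
  rewrite ln_pow by lra. assert (0 < ln 2) by (rewrite <- ln_1; apply ln_increasing; lra).
  field. lra.
Qed.

Lemma log2_le x y : 0 < x -> x <= y -> log2 x <= log2 y.
Proof.
  intros Hx [Hxy | ->]; [|lra]. unfold log2, Rdiv. apply Rmult_le_compat_r.
  - left. apply Rinv_0_lt_compat. rewrite <- ln_1. apply ln_increasing; lra.
  - left. now apply ln_increasing.
Qed.

Lemma out_eq_outp M h : out_eq M h (outp M h).
Proof. intro i; auto. Qed.

Section UniformLeakage.
Variable M : Trace -> Prop.
Hypothesis HM : is_program M.
Local Notation n := (length (dom M)).
Local Notation u := (unif M).
Local Notation count h := (sumL (dom M) (fun h' => ind (outp M h' = outp M h))).

Lemma INR_length_dom_pos : 0 < INR n.
Proof. apply lt_0_INR. pose proof (length_dom_pos M HM). lia. Qed.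

Lemma unif_dom h : In h (dom M) -> u h = / INR n.
Proof. intros Hh. unfold unif. now destruct (excluded_middle_informative (In h (dom M))). Qed.

Lemma unif_nonneg h : 0 <= u h.
Proof.
  unfold unif. destruct (excluded_middle_informative _); [|lra].
  left. apply Rinv_0_lt_compat, INR_length_dom_pos.
Qed.

Lemma dom_inhabited : exists h, In h (dom M).
Proof. pose proof (length_dom_pos M HM). destruct (dom M) as [|h l]; [simpl in *; lia | exists h; now left]. Qed.

Lemma V_H_unif : V_H M u = / INR n.
Proof.
  pose proof INR_length_dom_pos. apply Rle_antisym.
  - apply maxL_le; [left; now apply Rinv_0_lt_compat|]. intros h Hh. rewrite unif_dom by exact Hh. lra.
  - destruct dom_inhabited as [h Hh]. rewrite <- (unif_dom h Hh). now apply maxL_ge.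
Qed.

Lemma prO_unif_ge h : In h (dom M) -> / INR n <= prO M u (outp M h).
Proof.
  intros Hh. unfold prO.
  replace (/ INR n) with (u h * ind (out_eq M h (outp M h))).
  - apply (sumL_ge_term _ (fun h' => u h' * ind (out_eq M h' (outp M h)))); [|exact Hh].
    intros y _. pose proof (unif_nonneg y). pose proof (ind_bounds (out_eq M y (outp M h))). nra.
  - rewrite ind_true, unif_dom by (auto; intro i; auto). lra.
Qed.

Lemma prH_O_unif_nonneg h h' : In h (dom M) -> 0 <= prH_O M u h' (outp M h).
Proof.
  intros Hh. pose proof (prO_unif_ge h Hh). pose proof INR_length_dom_pos.
  assert (0 < / INR n) by now apply Rinv_0_lt_compat.
  pose proof (unif_nonneg h'). pose proof (ind_bounds (out_eq M h' (outp M h))).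
  unfold prH_O. apply Rmult_le_pos; [nra|]. left. apply Rinv_0_lt_compat. lra.
Qed.

Lemma prO_mul_max_prH_O h : In h (dom M) ->
  prO M u (outp M h) * maxL (dom M) (fun h' => prH_O M u h' (outp M h)) = / INR n.
Proof.
  intros Hh. pose proof (prO_unif_ge h Hh). pose proof INR_length_dom_pos.
  assert (0 < / INR n) by now apply Rinv_0_lt_compat.
  set (P := prO M u (outp M h)) in *.
  assert (Hmax : maxL (dom M) (fun h' => prH_O M u h' (outp M h)) = / INR n / P).
  { apply Rle_antisym.
    - apply maxL_le; [apply Rmult_le_pos; [lra | left; apply Rinv_0_lt_compat; lra]|].
      intros x Hx. unfold prH_O. fold P. rewrite unif_dom by exact Hx.
      pose proof (ind_bounds (out_eq M x (outp M h))). unfold Rdiv.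
      apply Rmult_le_compat_r; [left; apply Rinv_0_lt_compat; lra | nra].
    - replace (/ INR n / P) with (prH_O M u h (outp M h)); [exact (maxL_ge _ (fun h' => prH_O M u h' (outp M h)) h Hh)|].
      unfold prH_O. fold P. rewrite unif_dom, ind_true by (auto; intro i; auto). lra. }
  rewrite Hmax. field. lra.
Qed.

Lemma count_ge1 h : In h (dom M) -> 1 <= count h.
Proof.
  intros Hh. rewrite <- (ind_true (outp M h = outp M h)) at 1 by reflexivity.
  apply (sumL_ge_term _ (fun h' => ind (outp M h' = outp M h))); [|exact Hh].
  intros; apply ind_bounds.
Qed.

Lemma V_HO_unif_bounds : 0 < V_HO M u <= 1.
Proof.
  pose proof INR_length_dom_pos. assert (0 < / INR n) by now apply Rinv_0_lt_compat.
  unfold V_HO, sum_outs.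
  rewrite (sumL_ext _ _ (fun h => / INR n / count h))
    by (intros h Hh; now rewrite prO_mul_max_prH_O).
  assert (Hterm : forall h, In h (dom M) -> 0 < / INR n / count h <= / INR n).
  { intros h Hh. pose proof (count_ge1 h Hh). split; [apply Rdiv_lt_0_compat; lra|].
    unfold Rdiv. rewrite <- (Rmult_1_r (/ INR n)) at 2. apply Rmult_le_compat_l; [lra|].
    rewrite <- Rinv_1. apply Rinv_le_contravar; lra. }
  split.
  - destruct dom_inhabited as [h Hh].
    apply Rlt_le_trans with (/ INR n / count h); [now apply Hterm|].
    apply (sumL_ge_term _ (fun h0 => / INR n / count h0)); [|exact Hh].
    intros y Hy. left. now apply Hterm.
  - apply Rle_trans with (sumL (dom M) (fun _ => / INR n)).
    + apply sumL_le. intros h Hh. now apply Hterm.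
    + rewrite sumL_const. right. field. lra.
Qed.

Lemma ME_unif_le : ME u M <= log2 (INR n).
Proof.
  unfold ME. rewrite V_H_unif, Rinv_inv. pose proof V_HO_unif_bounds.
  assert (0 <= log2 (/ V_HO M u)).
  { rewrite <- log2_1. apply log2_le; [lra|]. rewrite <- Rinv_1. apply Rinv_le_contravar; lra. }
  lra.
Qed.

Lemma GE_unif_le : GE u M <= INR (1 + n).
Proof.
  pose proof INR_length_dom_pos.
  assert (HGH : G_H M u <= INR (1 + n)).
  { unfold G_H. eapply Rle_trans.
    - apply guess_le. apply Forall_forall. intros x Hx.
      apply in_map_iff in Hx as (h & <- & _). apply unif_nonneg.
    - rewrite length_map, sumL_map, (sumL_ext _ _ (fun _ => / INR n)) by (intros; now apply unif_dom).
      rewrite sumL_const. right. field. lra. }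
  assert (HGHO : 0 <= G_HO M u).
  { unfold G_HO, sum_outs. apply sumL_nonneg. intros h Hh.
    pose proof (count_ge1 h Hh). pose proof (prO_unif_ge h Hh).
    assert (0 < / INR n) by now apply Rinv_0_lt_compat.
    apply Rmult_le_pos; [apply Rmult_le_pos; [lra|] | left; apply Rinv_0_lt_compat; lra].
    apply guess_nonneg, Forall_forall. intros x Hx.
    apply in_map_iff in Hx as (h' & <- & _). now apply prH_O_unif_nonneg. }
  unfold GE. lra.
Qed.

Section RevealingProgram.
Hypothesis Hreveal :
  forall h y, In h (dom M) -> In y (dom M) -> y <> h -> ~ out_eq M y (outp M h).

Let Hnodup : NoDup (dom M) := proj1 (dom_spec M HM).

Lemma count_revealing h : In h (dom M) -> count h = 1.
Proof.
  intros Hh. rewrite (sumL_single _ _ h Hnodup Hh); [now apply ind_true|].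
  intros y Hy Hyh. apply ind_false. intros E. apply (Hreveal h y Hh Hy Hyh).
  rewrite <- E. apply out_eq_outp.
Qed.

Lemma prO_unif_revealing h : In h (dom M) -> prO M u (outp M h) = / INR n.
Proof.
  intros Hh. unfold prO. rewrite (sumL_single _ _ h Hnodup Hh).
  - rewrite ind_true, unif_dom by (apply out_eq_outp || exact Hh). lra.
  - intros y Hy Hyh. rewrite ind_false by now apply Hreveal. lra.
Qed.

Lemma prH_O_unif_revealing_self h : In h (dom M) -> prH_O M u h (outp M h) = 1.
Proof.
  intros Hh. pose proof INR_length_dom_pos. unfold prH_O.
  rewrite prO_unif_revealing, unif_dom, ind_true by (apply out_eq_outp || exact Hh).
  field. lra.
Qed.

Lemma prH_O_unif_revealing_other h y : In h (dom M) -> In y (dom M) -> y <> h ->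
  prH_O M u y (outp M h) = 0.
Proof. intros Hh Hy Hyh. unfold prH_O. rewrite ind_false by now apply Hreveal. lra. Qed.

Lemma guess_posterior_revealing h : In h (dom M) ->
  guess (map (fun y => prH_O M u y (outp M h)) (dom M)) = 1.
Proof.
  intros Hh. destruct (in_split _ _ Hh) as (l1 & l2 & Hsplit).
  assert (Hnh : ~ In h (l1 ++ l2)) by (apply NoDup_remove_2; now rewrite <- Hsplit).
  assert (Hzero : forall l, incl l (l1 ++ l2) ->
                    Forall (fun x => x = 0) (map (fun y => prH_O M u y (outp M h)) l)).
  { intros l Hl. apply Forall_forall. intros x Hx. apply in_map_iff in Hx as (y & <- & Hy).
    assert (Hy' : In y (l1 ++ l2)) by now apply Hl.
    apply prH_O_unif_revealing_other; [exact Hh| |].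
    - rewrite Hsplit. apply in_app_iff in Hy' as [|]; auto with datatypes.
    - intros ->. contradiction. }
  rewrite Hsplit, map_app. cbn [map]. rewrite prH_O_unif_revealing_self by exact Hh.
  apply guess_one_hot; apply Hzero; intros y Hy; auto with datatypes.
Qed.

Lemma ME_unif_revealing : ME u M = log2 (INR n).
Proof.
  pose proof INR_length_dom_pos. unfold ME. rewrite V_H_unif, Rinv_inv.
  unfold V_HO, sum_outs.
  rewrite (sumL_ext _ _ (fun _ => / INR n)).
  - rewrite sumL_const, Rinv_r, Rinv_1, log2_1 by lra. lra.
  - intros h Hh. rewrite prO_mul_max_prH_O, count_revealing by exact Hh. lra.
Qed.

Lemma GE_unif_revealing : GE u M = (INR n - 1) / 2.
Proof.
  pose proof INR_length_dom_pos. unfold GE, G_H, G_HO, sum_outs.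
  rewrite (map_ext_in _ (fun _ => / INR n)) by (intros; now apply unif_dom).
  rewrite map_const, guess_repeat.
  rewrite (sumL_ext _ _ (fun _ => / INR n)).
  - rewrite sumL_const. field. lra.
  - intros h Hh. rewrite count_revealing, prO_unif_revealing, guess_posterior_revealing
      by exact Hh.
    field. lra.
Qed.
End RevealingProgram.

End UniformLeakage.

Definition const_trace (i : nat) : Trace := fun _ _ => Some i.

Definition const_prog (A : nat -> Prop) (t : Trace) : Prop := exists i, A i /\ t = const_trace i.

Lemma in_dom_const_prog A h : in_dom (const_prog A) h <-> exists i, A i /\ h = Some i.
Proof.
  split.
  - intros (t & (i & Hi & ->) & <-). now exists i.
  - intros (i & Hi & ->). exists (const_trace i). split; [now exists i | reflexivity].
Qed.

Lemma const_prog_is_program A cand : (exists i, A i) -> (forall i, A i -> In (Some i) cand) ->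
  is_program (const_prog A).
Proof.
  intros [i0 Hi0] Hcand. apply (is_program_intro _ cand).
  - intros t t' (i & _ & ->) (j & _ & ->) Hij. unfold const_trace in Hij. congruence.
  - exists (Some i0). apply in_dom_const_prog. now exists i0.
  - intros h (i & Hi & ->)%in_dom_const_prog. now apply Hcand.
Qed.

Lemma outp_const_prog A i : A i -> outp (const_prog A) (Some i) = fun _ => Some i.
Proof.
  intros Hi. assert (Hdom : in_dom (const_prog A) (Some i)) by (apply in_dom_const_prog; eauto).
  destruct (trace_of_spec _ _ Hdom) as [(j & _ & Ej) Hj]. unfold outp. rewrite Ej in *.
  unfold const_trace in *. now rewrite Hj.
Qed.

Lemma const_prog_reveals A : is_program (const_prog A) ->
  forall h y, In h (dom (const_prog A)) -> In y (dom (const_prog A)) -> y <> h ->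
    ~ out_eq (const_prog A) y (outp (const_prog A) h).
Proof.
  intros HA h y Hh Hy Hyh Heq.
  apply (in_dom_dom _ _ HA), in_dom_const_prog in Hh as (i & Hi & ->).
  apply (in_dom_dom _ _ HA), in_dom_const_prog in Hy as (j & Hj & ->).
  specialize (Heq 0%nat). rewrite !outp_const_prog in Heq by assumption.
  unfold bot in Heq. destruct Heq as [|[|]]; congruence.
Qed.

Definition below (N : nat) : nat -> Prop := fun i => (i < N)%nat.

Lemma below_is_program N : (1 <= N)%nat -> is_program (const_prog (below N)).
Proof.
  intros HN. apply (const_prog_is_program _ (map Some (seq 0 N))).
  - exists 0%nat. unfold below. lia.
  - intros i Hi. apply in_map, in_seq. unfold below in Hi. lia.
Qed.

Lemma length_dom_below N : (1 <= N)%nat -> length (dom (const_prog (below N))) = N.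
Proof.
  intros HN. rewrite (length_dom_eq _ (map Some (seq 0 N))), length_map, length_seq.
  - reflexivity.
  - now apply below_is_program.
  - apply FinFun.Injective_map_NoDup; [intros a b; congruence | apply seq_NoDup].
  - intros h. rewrite in_dom_const_prog, in_map_iff. unfold below.
    split; intros (i & H1 & H2); exists i; rewrite in_seq in *; split; (lia || congruence).
Qed.

(* Every nonempty finite trace of an observation fixes the constant trace it may extend;
   the index 0 keeps the program nonempty. *)
Definition obs_indices (T : list FTrace) (i : nat) : Prop :=
  i = 0%nat \/ exists v t', In v T /\ v <> [] /\ fconcat v t' = const_trace i.

Definition first_input (v : FTrace) : Val :=
  match v with [] => Some 0%nat | s :: _ => s varH end.

Lemma obs_indices_first_input T i : obs_indices T i -> In (Some i) (Some 0%nat :: map first_input T).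
Proof.
  intros [-> | ([|s v] & t' & Hv & Hne & E)]; [now left | easy |].
  right. apply in_map_iff. exists (s :: v). split; [|exact Hv].
  apply (f_equal (fun t => t 0%nat varH)) in E. exact E.
Qed.

Lemma obs_completion_is_program T : is_program (const_prog (obs_indices T)).
Proof.
  apply (const_prog_is_program _ (Some 0%nat :: map first_input T)).
  - exists 0%nat. now left.
  - apply obs_indices_first_input.
Qed.

Lemma length_dom_obs_completion T : (length (dom (const_prog (obs_indices T))) <= S (length T))%nat.
Proof.
  rewrite <- (length_map first_input T).
  apply (length_dom_le _ (Some 0%nat :: map first_input T)); [apply obs_completion_is_program|].
  intros h (i & Hi & ->)%in_dom_const_prog. now apply obs_indices_first_input.
Qed.

Lemma obs_le_completion T A : obs_le T (const_prog A) -> obs_le T (const_prog (obs_indices T)).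
Proof.
  intros HT v Hv. destruct (HT v Hv) as (t' & i & _ & E).
  destruct v as [|s v].
  - exists (const_trace 0). exists 0%nat. split; [now left | reflexivity].
  - exists t', i. split; [|exact E]. right. exists (s :: v), t'. repeat split; easy.
Qed.

Lemma not_k_observable (P : (Trace -> Prop) -> Prop) k A :
  P (const_prog A) -> (forall M, is_program M -> (length (dom M) <= S k)%nat -> ~ P M) ->
  ~ k_observable P k.
Proof.
  intros HPA Hsmall Hobs. destruct (Hobs _ HPA) as (T & _ & HT & HTk & Hext).
  apply (Hsmall (const_prog (obs_indices T))).
  - apply obs_completion_is_program.
  - pose proof (length_dom_obs_completion T). lia.
  - apply Hext; [apply obs_completion_is_program | exact (obs_le_completion T A HT)].
Qed.

Lemma Q2R_nat m : Q2R (Z.of_nat m # 1) = INR m.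
Proof. unfold Q2R; simpl. rewrite Rinv_1, Rmult_1_r, <- INR_IZR_INZ. reflexivity. Qed.

Theorem theorem9 : forall k : nat, (0 < k)%nat ->
  ~ k_observable_pairs L_ME k /\ ~ k_observable_pairs L_GE k.
Proof.
  intros k _. set (N := (2 ^ (k + 3))%nat).
  assert (HkN : (2 * k + 6 <= N)%nat).
  { unfold N. rewrite Nat.pow_add_r. pose proof (Nat.pow_gt_lin_r 2 k). simpl. lia. }
  assert (HN := below_is_program N ltac:(lia)).
  split; intros Hobs; specialize (Hobs (Z.of_nat (k + 2) # 1)); revert Hobs;
    apply (not_k_observable _ k (below N)); unfold L_ME, L_GE; rewrite Q2R_nat.
  - split; [exact HN|].
    rewrite ME_unif_revealing, length_dom_below by (auto using const_prog_reveals || lia).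
    unfold N. rewrite log2_pow2. apply lt_INR. lia.
  - intros M HM HMk [_ HME]. pose proof (ME_unif_le M HM).
    assert (log2 (INR (length (dom M))) <= INR (k + 2)).
    { rewrite <- (log2_pow2 (k + 2)). apply log2_le; [apply INR_length_dom_pos, HM|].
      apply le_INR. pose proof (Nat.pow_gt_lin_r 2 (k + 2)). lia. }
    lra.
  - split; [exact HN|].
    rewrite GE_unif_revealing, length_dom_below by (auto using const_prog_reveals || lia).
    apply le_INR in HkN. rewrite plus_INR, mult_INR in HkN. rewrite plus_INR. simpl INR in *. lra.
  - intros M HM HMk [_ HGE]. pose proof (GE_unif_le M HM).
    assert (INR (1 + length (dom M)) <= INR (k + 2)) by (apply le_INR; lia). lra.
Qed.
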